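(* Let $t$ and $u$ be $\lambda$-terms (terms without explicit substitutions). Then $t \equiv_{S} u$ if and only if $t \equiv_{V} u$, where $\equiv_S$ is the contextual equivalence induced by weak reduction $\to_{w}$ of the silly substitution calculus and $\equiv_V$ is the contextual equivalence induced by call-by-value reduction $\to_{\beta_v}$.
   Context: Silly substitution calculus (SSC). Terms: $t,u,s ::= x \mid \lambda x.t \mid t\,u \mid t[x\backslash u]$, where $t[x\backslash u]$ is an explicit substitution (ES) binding $x$ in $t$; $\lambda x.t$ also binds $x$ in $t$; terms are taken up to $\alpha$-renaming; $\mathrm{fv}(t[x\backslash u]) = (\mathrm{fv}(t)\setminus\{x\})\cup \mathrm{fv}(u)$. Values are abstractions only: $v ::= \lambda x.t$. Substitution contexts: $S ::= \langle\cdot\rangle \mid S[x\backslash u]$. Weak contexts: $W ::= \langle\cdot\rangle \mid W\,t \mid t\,W \mid t[x\backslash W] \mid W[x\backslash u]$ (the hole is never under an abstraction). $W\langle t\rangle$ denotes plugging (which may capture variables); $W\langle\langle t\rangle\rangle$ means plugging where $W$ does not capture the free variables of $t$. Root rules: (multiplicative) $S\langle \lambda x.t\rangle u \mapsto_m S\langle t[x\backslash u]\rangle$; (exponential) $W\langle\langle x\rangle\rangle[x\backslash u] \mapsto_{e} W\langle\langle u\rangle\rangle[x\backslash u]$ for $W$ a weak context; (GC by value) $t[x\backslash S\langle v\rangle] \mapsto_{gcv} S\langle t\rangle$ if $x\notin\mathrm{fv}(t)$, $v$ a value. $\to_{wm}$, $\to_{we}$, $\to_{wgcv}$ are the closures of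 these root rules under weak contexts, and $\to_w := \to_{wm}\cup\to_{we}\cup\to_{wgcv}$. Call-by-value $\lambda$-calculus: $\lambda$-terms $t ::= x\mid \lambda x.t\mid tu$, values are abstractions, CbV contexts $V ::= \langle\cdot\rangle \mid t V \mid V t$, root rule $(\lambda x.t)v \mapsto_{\beta_v} t\{x:=v\}$ (meta-level capture-avoiding substitution) for $v$ a value, and $\to_{\beta_v}$ its closure under CbV contexts. Contextual equivalence: for a rewriting relation $\to$ on a language of terms, with contexts being terms of that language with exactly one hole (placed anywhere, including under abstractions), $t\equiv u$ iff for every context $C$ such that $C\langle t\rangle$ and $C\langle u\rangle$ are closed, $C\langle t\rangle$ is weakly $\to$-normalizing (reduces to a $\to$-normal form) iff $C\langle u\rangle$ is. $\equiv_S$ is this for $\to_w$ on SSC terms and contexts, $\equiv_V$ for $\to_{\beta_v}$ on $\lambda$-terms and $\lambda$-contexts. *)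

(* Terms are represented with de Bruijn indices (= terms up to
   alpha-renaming). Plugging into contexts does NOT shift, i.e. it may capture,
   exactly as the paper's plugging C<t>. *)
From Stdlib Require Import Arith List Relations.
Import ListNotations.

(* ES t u  represents  t[x\u] : index 0 of t refers to x, u is outside. *)
Inductive term : Type :=
| Var : nat -> term
| Lam : term -> term
| App : term -> term -> term
| ES  : term -> term -> term.

Fixpoint lift (d c : nat) (t : term) : term :=
  match t with
  | Var n => if n <? c then Var n else Var (n + d)
  | Lam b => Lam (lift d (S c) b)
  | App a b => App (lift d c a) (lift d c b)
  | ES a b => ES (lift d (S c) a) (lift d c b)
  end.

(* Substitution contexts S ::= <.> | S[x\u]; the list head is the outermost ES. *)
Fixpoint splug (s : list term) (t : term) : term :=
  match s with
  | nil => t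
  | u :: s' => ES (splug s' t) u
  end.

Inductive wctx : Type :=
| WHole : wctx
| WAppL : wctx -> term -> wctx
| WAppR : term -> wctx -> wctx
| WESArg : term -> wctx -> wctx
| WESBody : wctx -> term -> wctx.

Fixpoint wplug (W : wctx) (t : term) : term :=
  match W with
  | WHole => t
  | WAppL W' u => App (wplug W' t) u
  | WAppR u W' => App u (wplug W' t)
  | WESArg u W' => ES u (wplug W' t)
  | WESBody W' u => ES (wplug W' t) u
  end.

Fixpoint wdepth (W : wctx) : nat :=
  match W with
  | WHole => 0
  | WAppL W' _ => wdepth W'
  | WAppR _ W' => wdepth W'
  | WESArg _ W' => wdepth W'
  | WESBody W' _ => S (wdepth W')
  end.

Inductive ssc_root : term -> term -> Prop :=
(* S<\x.t> u  |->m  S<t[x\u]>   (u moved under the binders of S) *)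
| root_m : forall s t u,
    ssc_root (App (splug s (Lam t)) u) (splug s (ES t (lift (length s) 0 u)))
(* W<<x>>[x\u] |->e W<<u>>[x\u]  (the hole occurrence is the variable bound by
   the outer ES, i.e. index wdepth W; u is moved under wdepth W + 1 binders) *)
| root_e : forall W u,
    ssc_root (ES (wplug W (Var (wdepth W))) u)
             (ES (wplug W (lift (S (wdepth W)) 0 u)) u)
(* t[x\S<v>] |->gcv S<t> if x notin fv(t): x notin fv(t) means the body is
   lift 1 0 t for the term t with x removed *)
| root_gcv : forall t s v,
    ssc_root (ES (lift 1 0 t) (splug s (Lam v))) (splug s (lift (length s) 0 t)).

Inductive step_w : term -> term -> Prop :=
| w_root : forall t t', ssc_root t t' -> step_w t t'
| w_appL : forall t t' u, step_w t t' -> step_w (App t u) (App t' u)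
| w_appR : forall t u u', step_w u u' -> step_w (App t u) (App t u')
| w_esbody : forall t t' u, step_w t t' -> step_w (ES t u) (ES t' u)
| w_esarg : forall t u u', step_w u u' -> step_w (ES t u) (ES t u').

Inductive sctx : Type :=
| CHole : sctx
| CLam : sctx -> sctx
| CAppL : sctx -> term -> sctx
| CAppR : term -> sctx -> sctx
| CESBody : sctx -> term -> sctx
| CESArg : term -> sctx -> sctx.

Fixpoint cplug (C : sctx) (t : term) : term :=
  match C with
  | CHole => t
  | CLam C' => Lam (cplug C' t)
  | CAppL C' u => App (cplug C' t) u
  | CAppR u C' => App u (cplug C' t)
  | CESBody C' u => ES (cplug C' t) u
  | CESArg u C' => ES u (cplug C' t)
  end.

Fixpoint closed_at (k : nat) (t : term) : Prop :=
  match t with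
  | Var n => n < k
  | Lam b => closed_at (S k) b
  | App a b => closed_at k a /\ closed_at k b
  | ES a b => closed_at (S k) a /\ closed_at k b
  end.

Definition closed (t : term) : Prop := closed_at 0 t.

Definition normal {A : Type} (R : relation A) (t : A) : Prop :=
  forall t', ~ R t t'.

Definition weakly_normalizing {A : Type} (R : relation A) (t : A) : Prop :=
  exists n, clos_refl_trans A R t n /\ normal R n.

Definition ctx_equiv_S (t u : term) : Prop :=
  forall C : sctx, closed (cplug C t) -> closed (cplug C u) ->
    (weakly_normalizing step_w (cplug C t) <-> weakly_normalizing step_w (cplug C u)).

Inductive lterm : Type :=
| LVar : nat -> lterm
| LLam : lterm -> lterm
| LApp : lterm -> lterm -> lterm.

Fixpoint llift (d c : nat) (t : lterm) : lterm :=
  match t with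
  | LVar n => if n <? c then LVar n else LVar (n + d)
  | LLam b => LLam (llift d (S c) b)
  | LApp a b => LApp (llift d c a) (llift d c b)
  end.

Fixpoint lsubst (k : nat) (v : lterm) (t : lterm) : lterm :=
  match t with
  | LVar n => if n =? k then llift k 0 v
              else if k <? n then LVar (pred n) else LVar n
  | LLam b => LLam (lsubst (S k) v b)
  | LApp a b => LApp (lsubst k v a) (lsubst k v b)
  end.

Inductive step_bv : lterm -> lterm -> Prop :=
| bv_root : forall t b, step_bv (LApp (LLam t) (LLam b)) (lsubst 0 (LLam b) t)
| bv_appL : forall t t' u, step_bv t t' -> step_bv (LApp t u) (LApp t' u)
| bv_appR : forall t u u', step_bv u u' -> step_bv (LApp t u) (LApp t u').

Inductive lctx : Type :=
| LHole : lctx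
| LCLam : lctx -> lctx
| LCAppL : lctx -> lterm -> lctx
| LCAppR : lterm -> lctx -> lctx.

Fixpoint lplug (C : lctx) (t : lterm) : lterm :=
  match C with
  | LHole => t
  | LCLam C' => LLam (lplug C' t)
  | LCAppL C' u => LApp (lplug C' t) u
  | LCAppR u C' => LApp u (lplug C' t)
  end.

Fixpoint lclosed_at (k : nat) (t : lterm) : Prop :=
  match t with
  | LVar n => n < k
  | LLam b => lclosed_at (S k) b
  | LApp a b => lclosed_at k a /\ lclosed_at k b
  end.

Definition lclosed (t : lterm) : Prop := lclosed_at 0 t.

Definition ctx_equiv_V (t u : lterm) : Prop :=
  forall C : lctx, lclosed (lplug C t) -> lclosed (lplug C u) ->
    (weakly_normalizing step_bv (lplug C t) <-> weakly_normalizing step_bv (lplug C u)).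

Fixpoint embed (t : lterm) : term :=
  match t with
  | LVar n => Var n
  | LLam b => Lam (embed b)
  | LApp a b => App (embed a) (embed b)
  end.

(* Both calculi are governed by one big-step call-by-value evaluation [eval] on
   SSC terms, in which an explicit substitution t[x\u] is evaluated like the
   redex (\x.t) u.  For closed SSC terms, ->w-normalization is equivalent to
   evaluation: evaluation is preserved backwards along ->w (read through
   parallel substitution), and a closed ->w-normal form is an answer, i.e. a
   tree of explicit substitutions over abstractions, which evaluates;
   conversely an evaluation is simulated by ->w-reduction to an answer, and
   answers normalize because only garbage collection applies to them.  The same
   equivalence holds between ->bv-normalization of a closed lambda-term and
   evaluation of its embedding.  Finally, evaluation is invariant under
   unfolding every t[x\u] into (\x.t) u, which turns SSC contexts into
   lambda-contexts, while lambda-contexts embed into SSC contexts directly. *)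

From Stdlib Require Import Arith List Relations Lia FunctionalExtensionality Classical.
Import ListNotations.

(** * Parallel substitution *)

Definition up_ren (xi : nat -> nat) : nat -> nat :=
  fun n => match n with 0 => 0 | S m => S (xi m) end.

Fixpoint rename (xi : nat -> nat) (t : term) : term :=
  match t with
  | Var n => Var (xi n)
  | Lam b => Lam (rename (up_ren xi) b)
  | App a b => App (rename xi a) (rename xi b)
  | ES a b => ES (rename (up_ren xi) a) (rename xi b)
  end.

Definition scons (x : term) (s : nat -> term) : nat -> term :=
  fun n => match n with 0 => x | S m => s m end.

Definition up (s : nat -> term) : nat -> term :=
  scons (Var 0) (fun n => rename S (s n)).

Fixpoint subst (s : nat -> term) (t : term) : term :=
  match t with
  | Var n => s n
  | Lam b => Lam (subst (up s) b)
  | App a b => App (subst s a) (subst s b)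
  | ES a b => ES (subst (up s) a) (subst s b)
  end.

Fixpoint upn (d : nat) (s : nat -> term) : nat -> term :=
  match d with 0 => s | S d' => up (upn d' s) end.

Ltac binder_ext := f_equal; f_equal; apply functional_extensionality; intros [|n].

Lemma rename_rename t xi zeta :
  rename xi (rename zeta t) = rename (fun n => xi (zeta n)) t.
Proof.
  revert xi zeta; induction t; intros; simpl; rewrite ?IHt, ?IHt1, ?IHt2;
    try reflexivity; binder_ext; reflexivity.
Qed.

Lemma rename_ext t xi zeta : (forall n, xi n = zeta n) -> rename xi t = rename zeta t.
Proof. intros H. f_equal. apply functional_extensionality, H. Qed.

Lemma rename_id t : rename (fun n => n) t = t.
Proof.
  induction t; simpl; f_equal; auto;
    (replace (up_ren (fun n => n)) with (fun n : nat => n)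
      by (apply functional_extensionality; intros [|n]; reflexivity)); auto.
Qed.

Lemma rename_add0 t : rename (fun m => m + 0) t = t.
Proof. rewrite <- (rename_id t) at 2. apply rename_ext. lia. Qed.

Lemma lift_rename t d c :
  lift d c t = rename (fun n => if n <? c then n else n + d) t.
Proof.
  revert c; induction t; intros; simpl; rewrite ?IHt, ?IHt1, ?IHt2.
  all: try (destruct (n <? c); reflexivity); try reflexivity.
  all: binder_ext; [reflexivity|]; simpl; change (S n <? S c) with (n <? c);
    destruct (n <? c); reflexivity.
Qed.

Lemma lift0_rename t d : lift d 0 t = rename (fun n => n + d) t.
Proof. apply lift_rename. Qed.

Lemma subst_rename t s xi :
  subst s (rename xi t) = subst (fun n => s (xi n)) t.
Proof.
  revert s xi; induction t; intros; simpl; rewrite ?IHt, ?IHt1, ?IHt2;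
    try reflexivity; binder_ext; reflexivity.
Qed.

Lemma rename_subst t s xi :
  rename xi (subst s t) = subst (fun n => rename xi (s n)) t.
Proof.
  revert s xi; induction t; intros; simpl; rewrite ?IHt, ?IHt1, ?IHt2;
    try reflexivity; binder_ext; try reflexivity;
    unfold up, scons; rewrite !rename_rename; reflexivity.
Qed.

Lemma subst_subst t s tau :
  subst tau (subst s t) = subst (fun n => subst tau (s n)) t.
Proof.
  assert (up_comp : forall s tau n,
    subst (up tau) (up s n) = up (fun m => subst tau (s m)) n).
  { intros s' tau' [|n]; [reflexivity|].
    unfold up, scons. rewrite subst_rename, rename_subst. reflexivity. }
  revert s tau; induction t; intros; simpl; rewrite ?IHt, ?IHt1, ?IHt2;
    try reflexivity; f_equal; f_equal; apply functional_extensionality; apply up_comp.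
Qed.

Lemma subst_var t : subst Var t = t.
Proof.
  induction t; simpl; f_equal; auto;
    (replace (up Var) with Var
      by (apply functional_extensionality; intros [|n]; reflexivity)); auto.
Qed.

Lemma rename_as_subst t xi : rename xi t = subst (fun n => Var (xi n)) t.
Proof.
  revert xi; induction t; intros; simpl; rewrite ?IHt, ?IHt1, ?IHt2;
    try reflexivity; binder_ext; reflexivity.
Qed.

Lemma subst_up_scons t s v :
  subst (scons v Var) (subst (up s) t) = subst (scons v s) t.
Proof.
  rewrite subst_subst. f_equal. apply functional_extensionality; intros [|n];
    [reflexivity|]. unfold up, scons. rewrite subst_rename. apply subst_var.
Qed.

Lemma subst_subst_scons t s x :
  subst s (subst (scons x Var) t) = subst (scons (subst s x) s) t.
Proof.
  rewrite subst_subst. f_equal. apply functional_extensionality; intros [|n];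
    reflexivity.
Qed.

Lemma upn_up d s : upn d (up s) = up (upn d s).
Proof. induction d; simpl; congruence. Qed.

Lemma upn_shift d s n : upn d s (n + d) = rename (fun m => m + d) (s n).
Proof.
  revert s n; induction d; intros; simpl.
  - rewrite Nat.add_0_r, rename_add0. reflexivity.
  - rewrite Nat.add_succ_r. unfold up at 1, scons. rewrite IHd, rename_rename.
    apply rename_ext. lia.
Qed.

Lemma subst_upn_scons_shift d w s t :
  subst (upn d (scons w s)) (rename (fun m => m + S d) t) =
  subst (fun n => rename (fun m => m + d) (s n)) t.
Proof.
  rewrite subst_rename. f_equal. apply functional_extensionality; intros n.
  replace (n + S d) with (S n + d) by lia. apply (upn_shift d (scons w s) (S n)).
Qed.

Lemma subst_upn_scons_var_shift d w t :
  subst (upn d (scons w Var)) (rename (fun m => m + S d) t) =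
  rename (fun m => m + d) t.
Proof. rewrite subst_upn_scons_shift, rename_as_subst. reflexivity. Qed.

Fixpoint wsubst (s : nat -> term) (W : wctx) : wctx :=
  match W with
  | WHole => WHole
  | WAppL W' u => WAppL (wsubst s W') (subst s u)
  | WAppR u W' => WAppR (subst s u) (wsubst s W')
  | WESArg u W' => WESArg (subst (up s) u) (wsubst s W')
  | WESBody W' u => WESBody (wsubst (up s) W') (subst s u)
  end.

Lemma wdepth_wsubst W s : wdepth (wsubst s W) = wdepth W.
Proof. revert s; induction W; intros; simpl; auto. Qed.

Lemma subst_wplug W s t :
  subst s (wplug W t) = wplug (wsubst s W) (subst (upn (wdepth W) s) t).
Proof. revert s; induction W; intros; simpl; rewrite ?IHW, ?upn_up; reflexivity. Qed.

(** * Big-step evaluation *)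

Inductive eval : term -> term -> Prop :=
| eval_lam : forall b, eval (Lam b) (Lam b)
| eval_app : forall a b a' v r, eval a (Lam a') -> eval b v ->
    eval (subst (scons v Var) a') r -> eval (App a b) r
| eval_es : forall a b v r, eval b v -> eval (subst (scons v Var) a) r ->
    eval (ES a b) r.

Lemma eval_abs x r : eval x r -> exists b, r = Lam b.
Proof. induction 1; eauto. Qed.

Lemma eval_det x r1 r2 : eval x r1 -> eval x r2 -> r1 = r2.
Proof.
  intros H; revert r2;
    induction H as [b | a b a' v r _ IHa _ IHb _ IHr | a b v r _ IHb _ IHr];
    intros r2 H2; inversion_clear H2 as [| ? ? a2 v2 ? Ha Hb Hr | ? ? v2 ? Hb Hr];
    auto.
  - injection (IHa _ Ha) as <-. rewrite <- (IHb _ Hb) in Hr. auto.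
  - rewrite <- (IHb _ Hb) in Hr. auto.
Qed.

Lemma eval_det_value x r v : eval x r -> eval x v -> eval v r.
Proof.
  intros Hr Hv. rewrite (eval_det x r v Hr Hv).
  destruct (eval_abs x v Hv) as [b ->]. constructor.
Qed.

Inductive eval_sctx : (nat -> term) -> list term -> (nat -> term) -> Prop :=
| eval_sctx_nil : forall s, eval_sctx s [] s
| eval_sctx_cons : forall s u l v s', eval (subst s u) v ->
    eval_sctx (scons v s) l s' -> eval_sctx s (u :: l) s'.

Lemma eval_subst_splug l s x r :
  eval (subst s (splug l x)) r <-> exists s', eval_sctx s l s' /\ eval (subst s' x) r.
Proof.
  revert s; induction l as [|u l IHl]; intros s; simpl.
  - split.
    + intros H. exists s. split; [constructor | auto].
    + intros [s' [Hs H]]. inversion Hs; subst; auto.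
  - split.
    + intros H. inversion_clear H as [| | ? ? v ? Hu Hx].
      rewrite subst_up_scons, IHl in Hx. destruct Hx as [s' [Hs Hx]].
      exists s'. split; [econstructor; eauto | auto].
    + intros [s' [Hs Hx]]. inversion Hs; subst. econstructor; eauto.
      rewrite subst_up_scons. apply IHl. eauto.
Qed.

Lemma eval_sctx_shift s l s' : eval_sctx s l s' -> forall n, s' (n + length l) = s n.
Proof.
  induction 1 as [|s u l v s' _ _ IH]; intros n; simpl.
  - f_equal; lia.
  - rewrite Nat.add_succ_r. apply (IH (S n)).
Qed.

Lemma subst_lift_eval_sctx s l s' t : eval_sctx s l s' ->
  subst s' (lift (length l) 0 t) = subst s t.
Proof.
  intros H. rewrite lift0_rename, subst_rename. f_equal.
  apply functional_extensionality. apply (eval_sctx_shift _ _ _ H).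
Qed.

Lemma eval_wplug_value x r : eval x r -> forall W u v, eval u v ->
  x = wplug W (rename (fun m => m + wdepth W) u) ->
  eval (wplug W (rename (fun m => m + wdepth W) v)) r.
Proof.
  induction 1 as [b | a b a' v r Ha IHa Hb IHb Hr IHr | a b v r Hb IHb Ha IHa];
    intros W u0 v0 Hu Hx; destruct W; simpl in *; try discriminate;
    try (rewrite rename_add0 in *; subst; eapply eval_det_value; [|exact Hu];
         econstructor; eauto).
  - injection Hx as -> ->. econstructor; eauto.
  - injection Hx as -> ->. econstructor; eauto.
  - injection Hx as -> ->. econstructor; eauto.
  - injection Hx as -> ->. econstructor; eauto.
    rewrite subst_wplug in *.
    specialize (IHa (wsubst (scons v Var) W) u0 v0 Hu).
    rewrite wdepth_wsubst, !subst_upn_scons_var_shift in IHa.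
    rewrite subst_upn_scons_var_shift. apply IHa. reflexivity.
Qed.

Lemma eval_root_expand x y : ssc_root x y -> forall s r,
  eval (subst s y) r -> eval (subst s x) r.
Proof.
  destruct 1 as [l t u | W u | t l v]; intros s r H.
  - apply eval_subst_splug in H. destruct H as [s' [Hs Ht]]. simpl in Ht.
    inversion_clear Ht as [| | ? ? v ? Hu Hr].
    rewrite (subst_lift_eval_sctx _ _ _ _ Hs) in Hu.
    eapply eval_app with (a' := subst (up s') t); eauto.
    apply eval_subst_splug. exists s'. split; [auto | constructor].
  - simpl in *. inversion_clear H as [| | ? ? v ? Hu Hr]. econstructor; [exact Hu|].
    rewrite subst_up_scons, subst_wplug in *.
    rewrite lift0_rename, subst_upn_scons_shift, <- rename_subst in Hr.
    change (subst (upn (wdepth W) (scons v s)) (Var (wdepth W)))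
      with (upn (wdepth W) (scons v s) (0 + wdepth W)).
    rewrite upn_shift.
    pose proof (eval_wplug_value _ _ Hr (wsubst (scons v s) W) (subst s u) v Hu) as Hv.
    rewrite wdepth_wsubst in Hv. apply Hv. reflexivity.
  - apply eval_subst_splug in H. destruct H as [s' [Hs Ht]].
    rewrite (subst_lift_eval_sctx _ _ _ _ Hs) in Ht. simpl.
    econstructor.
    + apply eval_subst_splug. exists s'. split; [eauto | constructor].
    + rewrite subst_up_scons, lift0_rename, (rename_ext t _ S) by lia.
      rewrite subst_rename. exact Ht.
Qed.

Lemma eval_step_expand x y : step_w x y -> forall s r,
  eval (subst s y) r -> eval (subst s x) r.
Proof.
  induction 1; intros s r H'; simpl in *.
  - eapply eval_root_expand; eauto.
  - inversion H'; subst. econstructor; eauto.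
  - inversion H'; subst. econstructor; eauto.
  - inversion H'; subst. econstructor; eauto. rewrite subst_up_scons in *. eauto.
  - inversion H'; subst. econstructor; eauto.
Qed.

Lemma eval_steps_expand x y r : clos_refl_trans _ step_w x y -> eval y r -> eval x r.
Proof.
  induction 1; auto. rewrite <- (subst_var x), <- (subst_var y).
  apply eval_step_expand; auto.
Qed.

(** * Evaluation is simulated by weak reduction *)

Inductive answer : term -> Prop :=
| answer_lam : forall b, answer (Lam b)
| answer_es : forall a b, answer a -> answer b -> answer (ES a b).

Fixpoint aval (t : term) : term :=
  match t with
  | ES a b => subst (scons (aval b) Var) (aval a)
  | _ => t
  end.

Lemma aval_rename t xi : aval (rename xi t) = rename xi (aval t).
Proof.
  revert xi; induction t; intros; simpl; auto.
  rewrite IHt1, IHt2, rename_subst, subst_rename. f_equal.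
  apply functional_extensionality; intros [|n]; reflexivity.
Qed.

Lemma answer_rename t xi : answer t -> answer (rename xi t).
Proof. intros H; revert xi; induction H; intros; simpl; constructor; auto. Qed.

Lemma answer_rename_inv t xi : answer (rename xi t) -> answer t.
Proof.
  revert xi; induction t; intros xi H; simpl in H; inversion H; subst;
    constructor; eauto.
Qed.

Lemma answer_lift t d : answer t -> answer (lift d 0 t).
Proof. rewrite lift0_rename. apply answer_rename. Qed.

Lemma aval_answer t : answer t -> exists b, aval t = Lam b.
Proof.
  induction 1; simpl; eauto. destruct IHanswer1 as [b1 ->]. simpl. eauto.
Qed.

Lemma answer_splug t : answer t ->
  exists l c, t = splug l (Lam c) /\ Forall answer l.
Proof.
  induction 1 as [b | a b _ [l [c [-> Hl]]] Hb _].
  - exists [], b. auto.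
  - exists (b :: l), c. auto.
Qed.

Lemma answer_splug_iff l x : answer (splug l x) <-> Forall answer l /\ answer x.
Proof.
  induction l as [|u l IHl]; simpl.
  - intuition.
  - split.
    + intros H. inversion H; subst. apply IHl in H2. intuition.
    + intros [Hl Hx]. inversion Hl; subst. constructor; [apply IHl|]; auto.
Qed.

Lemma answer_wplug_var W k : ~ answer (wplug W (Var k)).
Proof. induction W; intros H; simpl in H; inversion H; auto. Qed.

Fixpoint splug_wctx (l : list term) : wctx :=
  match l with [] => WHole | u :: l' => WESBody (splug_wctx l') u end.

Lemma splug_wplug l x : splug l x = wplug (splug_wctx l) x.
Proof. induction l; simpl; congruence. Qed.

Lemma wdepth_splug_wctx l : wdepth (splug_wctx l) = length l.
Proof. induction l; simpl; auto. Qed.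

Fixpoint wcomp (W W2 : wctx) : wctx :=
  match W with
  | WHole => W2
  | WAppL W' u => WAppL (wcomp W' W2) u
  | WAppR u W' => WAppR u (wcomp W' W2)
  | WESArg u W' => WESArg u (wcomp W' W2)
  | WESBody W' u => WESBody (wcomp W' W2) u
  end.

Lemma wplug_wcomp W W2 t : wplug (wcomp W W2) t = wplug W (wplug W2 t).
Proof. induction W; simpl; congruence. Qed.

Lemma step_wplug W x y : step_w x y -> step_w (wplug W x) (wplug W y).
Proof.
  induction W; intros; simpl;
    [auto | apply w_appL | apply w_appR | apply w_esarg | apply w_esbody]; auto.
Qed.

Lemma steps_wplug W x y : clos_refl_trans _ step_w x y ->
  clos_refl_trans _ step_w (wplug W x) (wplug W y).
Proof.
  induction 1; [apply rt_step, step_wplug | apply rt_refl | eapply rt_trans]; eauto.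
Qed.

(* [wenv r W s]: every ES argument of [W] is an answer, and [s] extends [r] by
   their values (substituted by the environment at their position). *)
Inductive wenv : (nat -> term) -> wctx -> (nat -> term) -> Prop :=
| wenv_hole : forall r, wenv r WHole r
| wenv_appL : forall r W s u, wenv r W s -> wenv r (WAppL W u) s
| wenv_appR : forall r W s u, wenv r W s -> wenv r (WAppR u W) s
| wenv_esarg : forall r W s u, wenv r W s -> wenv r (WESArg u W) s
| wenv_esbody : forall r W s u, answer u ->
    wenv (scons (subst r (aval u)) r) W s -> wenv r (WESBody W u) s.

Lemma wenv_wcomp r W s W2 s2 : wenv r W s -> wenv s W2 s2 -> wenv r (wcomp W W2) s2.
Proof. induction 1; intros; simpl; try constructor; auto. Qed.

Lemma wenv_shift r W s : wenv r W s -> forall j, s (j + wdepth W) = r j.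
Proof.
  induction 1 as [| | | | r W s u _ _ IH]; intros j; simpl; auto.
  rewrite Nat.add_succ_r. apply (IH (S j)).
Qed.

Lemma wenv_var_or_lam r W s :
  wenv r W s -> (forall j, (exists m, r j = Var m) \/ (exists b, r j = Lam b)) ->
  forall i, (exists m, s i = Var m) \/ (exists b, s i = Lam b).
Proof.
  induction 1 as [| | | | r W s u Hu _ IH]; auto.
  intros Hr. apply IH. intros [|j]; simpl; auto.
  destruct (aval_answer u Hu) as [b ->]. simpl. eauto.
Qed.

Lemma wenv_splug l r : Forall answer l -> exists s,
  wenv r (splug_wctx l) s /\ forall t, subst r (aval (splug l t)) = subst s (aval t).
Proof.
  intros Hl; revert r; induction Hl as [|u l Hu _ IH]; intros r; simpl.
  - exists r. split; [constructor | auto].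
  - destruct (IH (scons (subst r (aval u)) r)) as [s [Hs Heq]].
    exists s. split; [constructor; auto|].
    intros t. rewrite subst_subst_scons. auto.
Qed.

Definition reaches_answer (W : wctx) (s : nat -> term) (a r : term) : Prop :=
  exists n, answer n /\ clos_refl_trans _ step_w (wplug W a) (wplug W n) /\
    subst s (aval n) = r.

(* One exponential step copies the answer bound to the variable. *)
Lemma reaches_answer_bound_var r W s i : wenv r W s -> i < wdepth W ->
  reaches_answer W s (Var i) (s i).
Proof.
  intros He; revert i; induction He as [r | r W s u _ IH | r W s u _ IH
    | r W s u _ IH | r W s u Hu He IH]; intros i Hi; simpl in *; try lia.
  1-3: destruct (IH i Hi) as [n [Hn [Hst Hv]]]; exists n; repeat split; auto.
  1: apply (steps_wplug (WAppL WHole u)); auto.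
  1: apply (steps_wplug (WAppR u WHole)); auto.
  1: apply (steps_wplug (WESArg u WHole)); auto.
  destruct (Nat.eq_dec i (wdepth W)) as [->|Hne].
  - exists (lift (S (wdepth W)) 0 u). repeat split.
    + apply answer_lift; auto.
    + apply rt_step, w_root, root_e.
    + rewrite lift0_rename, aval_rename, subst_rename.
      pose proof (wenv_shift _ _ _ He) as Hsh.
      replace (fun n => s (n + S (wdepth W))) with r.
      * exact (eq_sym (Hsh 0)).
      * apply functional_extensionality; intros n.
        rewrite Nat.add_succ_r. symmetry. apply (Hsh (S n)).
  - destruct (IH i ltac:(lia)) as [n [Hn [Hst Hv]]]. exists n; repeat split; auto.
    apply (steps_wplug (WESBody WHole u)); auto.
Qed.

Definition simulated (d r : term) : Prop :=
  forall W s a, wenv Var W s -> d = subst s a -> reaches_answer W s a r.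

Lemma wenv_Var_var_or_lam W s i : wenv Var W s ->
  (exists m, s i = Var m) \/ (exists b, s i = Lam b).
Proof. intros He. apply (wenv_var_or_lam _ _ _ He). eauto. Qed.

Lemma simulated_lam b : simulated (Lam b) (Lam b).
Proof.
  intros W s [n| x | |] He Hd; simpl in Hd; try discriminate.
  - destruct (Nat.lt_ge_cases n (wdepth W)) as [Hlt|Hge].
    + rewrite Hd. apply (reaches_answer_bound_var _ _ _ _ He Hlt).
    + pose proof (wenv_shift _ _ _ He (n - wdepth W)) as Hsh.
      replace (n - wdepth W + wdepth W) with n in Hsh by lia. congruence.
  - exists (Lam x). repeat split; [constructor | apply rt_refl | auto].
Qed.

(* The function is reduced in the context [W _ b], the argument in [W n1 _], and
   the resulting [S<\x.c> n2] fires a multiplicative step. *)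
Lemma simulated_app a b a' v r :
  simulated a (Lam a') -> simulated b v -> simulated (subst (scons v Var) a') r ->
  simulated (App a b) r.
Proof.
  intros Sa Sb Sr W s [n| |x1 x2|] He Hd; simpl in Hd; try discriminate.
  { destruct (wenv_Var_var_or_lam W s n He) as [[m Hm]|[c Hm]]; congruence. }
  injection Hd as -> ->.
  destruct (Sa (wcomp W (WAppL WHole x2)) s x1) as [n1 [A1 [R1 V1]]]; auto.
  { eapply wenv_wcomp; eauto. repeat constructor. }
  destruct (Sb (wcomp W (WAppR n1 WHole)) s x2) as [n2 [A2 [R2 V2]]]; auto.
  { eapply wenv_wcomp; eauto. repeat constructor. }
  destruct (answer_splug _ A1) as [l [c [-> Hl]]].
  destruct (wenv_splug l s Hl) as [s' [Hs' Hval]].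
  rewrite Hval in V1. simpl in V1. injection V1 as <-.
  set (n2' := lift (length l) 0 n2).
  assert (V2' : subst s' (aval n2') = v).
  { unfold n2'. rewrite lift0_rename, aval_rename, subst_rename, <- V2. f_equal.
    apply functional_extensionality; intros j.
    rewrite <- (wdepth_splug_wctx l). apply (wenv_shift _ _ _ Hs'). }
  destruct (Sr (wcomp (wcomp W (splug_wctx l)) (WESBody WHole n2')) (scons v s') c)
    as [n3 [A3 [R3 V3]]].
  { eapply wenv_wcomp; [eapply wenv_wcomp; eauto|].
    rewrite <- V2' at 1. constructor; [apply answer_lift; auto | constructor]. }
  { rewrite subst_up_scons. reflexivity. }
  exists (splug l (ES n3 n2')). repeat split.
  - apply answer_splug_iff. split; auto. constructor; [|apply answer_lift]; auto.
  - rewrite !wplug_wcomp in R1; rewrite !wplug_wcomp in R2; rewrite !wplug_wcomp in R3.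
    simpl in R1, R2, R3.
    eapply rt_trans; [exact R1|]. eapply rt_trans; [exact R2|].
    eapply rt_trans; [apply rt_step, step_wplug, w_root, root_m|].
    rewrite !splug_wplug. exact R3.
  - rewrite Hval. simpl. rewrite subst_subst_scons, V2'. exact V3.
Qed.

Lemma simulated_es a b v r :
  simulated b v -> simulated (subst (scons v Var) a) r -> simulated (ES a b) r.
Proof.
  intros Sb Sr W s [n| | |x1 x2] He Hd; simpl in Hd; try discriminate.
  { destruct (wenv_Var_var_or_lam W s n He) as [[m Hm]|[c Hm]]; congruence. }
  injection Hd as -> ->.
  destruct (Sb (wcomp W (WESArg x1 WHole)) s x2) as [n2 [A2 [R2 V2]]]; auto.
  { eapply wenv_wcomp; eauto. repeat constructor. }
  destruct (Sr (wcomp W (WESBody WHole n2)) (scons v s) x1) as [n1 [A1 [R1 V1]]].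
  { eapply wenv_wcomp; eauto. rewrite <- V2. constructor; [auto | constructor]. }
  { rewrite subst_up_scons. reflexivity. }
  exists (ES n1 n2). repeat split.
  - constructor; auto.
  - rewrite !wplug_wcomp in R1; rewrite !wplug_wcomp in R2. simpl in R1, R2.
    eapply rt_trans; eauto.
  - simpl. rewrite subst_subst_scons, V2. exact V1.
Qed.

Lemma eval_simulated d r : eval d r -> simulated d r.
Proof.
  induction 1; [apply simulated_lam | eapply simulated_app | eapply simulated_es]; eauto.
Qed.

(** * Weak normalization in the SSC *)

Fixpoint size (t : term) : nat :=
  match t with
  | Var _ => 1
  | Lam b => S (size b)
  | App a b | ES a b => S (size a + size b)
  end.

Lemma size_rename t xi : size (rename xi t) = size t.
Proof. revert xi; induction t; intros; simpl; auto. Qed.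

Lemma size_splug l x y : size (splug l x) + size y = size (splug l y) + size x.
Proof. induction l; simpl; lia. Qed.

(* Only garbage collection applies inside an answer, and it shrinks the term. *)
Lemma answer_step n n' : step_w n n' -> answer n -> answer n' /\ size n' < size n.
Proof.
  induction 1 as [n n' Hr | | | n n' u _ IH | n u u' _ IH]; intros A;
    try (inversion A; fail).
  - destruct Hr as [l t u | W u | t l v]; inversion A as [| a b Aa Ab]; subst.
    + exfalso; eapply answer_wplug_var; eauto.
    + rewrite lift0_rename in Aa. apply answer_rename_inv in Aa.
      apply answer_splug_iff in Ab. destruct Ab as [Hl _]. split.
      * apply answer_splug_iff. split; [auto | apply answer_lift; auto].
      * pose proof (size_splug l (lift (length l) 0 t) (Lam v)).
        simpl. rewrite !lift0_rename, !size_rename in *. simpl in *. lia.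
  - inversion A as [| a b Aa Ab]; subst.
    destruct (IH Aa). split; [constructor|simpl; lia]; auto.
  - inversion A as [| a b Aa Ab]; subst.
    destruct (IH Ab). split; [constructor|simpl; lia]; auto.
Qed.

Lemma answer_wn n : answer n -> weakly_normalizing step_w n.
Proof.
  induction n as [n IH] using (well_founded_induction (Wf_nat.well_founded_ltof _ size)).
  intros A. destruct (classic (exists n', step_w n n')) as [[n' Hn']|Hnf].
  - destruct (answer_step _ _ Hn' A) as [A' Hlt].
    destruct (IH n' Hlt A') as [m [Hm Hnm]].
    exists m. split; [eapply rt_trans; [apply rt_step|]|]; eauto.
  - exists n. split; [apply rt_refl|]. intros n' Hn'. eauto.
Qed.

Lemma eval_wn t r : eval t r -> weakly_normalizing step_w t.
Proof.
  intros H.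
  destruct (eval_simulated _ _ H WHole Var t (wenv_hole Var) (eq_sym (subst_var t)))
    as [n [A [R _]]].
  destruct (answer_wn n A) as [m [Rm Hm]].
  exists m. split; [eapply rt_trans|]; eauto.
Qed.


Lemma closed_at_rename t k k' xi : closed_at k t ->
  (forall n, n < k -> xi n < k') -> closed_at k' (rename xi t).
Proof.
  revert k k' xi; induction t; intros k k' xi H Hx; simpl in *; auto.
  - eapply IHt; eauto. intros [|n] Hn; simpl; [lia|]. specialize (Hx n). lia.
  - destruct H; split; eauto.
  - destruct H; split; eauto. eapply IHt1; eauto.
    intros [|n] Hn; simpl; [lia|]. specialize (Hx n). lia.
Qed.

Lemma closed_at_rename_inv t k k' xi : closed_at k' (rename xi t) ->
  (forall n, xi n < k' -> n < k) -> closed_at k t.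
Proof.
  revert k k' xi; induction t; intros k k' xi H Hx; simpl in *; auto.
  - eapply IHt; eauto. intros [|n] Hn; simpl in *; [lia|]. specialize (Hx n). lia.
  - destruct H; split; eauto.
  - destruct H; split; eauto. eapply IHt1; eauto.
    intros [|n] Hn; simpl in *; [lia|]. specialize (Hx n). lia.
Qed.

Lemma closed_at_lift t k d : closed_at k t -> closed_at (k + d) (lift d 0 t).
Proof. intros H. rewrite lift0_rename. eapply closed_at_rename; eauto. lia. Qed.

Lemma closed_at_wplug W j t : closed_at j (wplug W t) -> closed_at (j + wdepth W) t.
Proof.
  revert j; induction W; intros j H; simpl in *.
  - rewrite Nat.add_0_r; auto.
  - apply IHW; tauto.
  - apply IHW; tauto.
  - apply IHW; tauto.
  - rewrite Nat.add_succ_r. apply (IHW (S j)); tauto.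
Qed.

Lemma closed_at_wplug_replace W j t t' : closed_at j (wplug W t) ->
  closed_at (j + wdepth W) t' -> closed_at j (wplug W t').
Proof.
  revert j; induction W; intros j H H'; simpl in *;
    try (destruct H; split; eauto; fail).
  - rewrite Nat.add_0_r in H'; auto.
  - destruct H; split; auto. apply IHW; auto. rewrite Nat.add_succ_r in H'. auto.
Qed.

Lemma closed_at_step t t' k : step_w t t' -> closed_at k t -> closed_at k t'.
Proof.
  intros H; revert k; induction H as [t t' Hr| | | |]; intros k Hc; simpl in *;
    try (destruct Hc; split; eauto; fail).
  destruct Hr as [l t u | W u | t l v]; simpl in *; destruct Hc as [H1 H2].
  - rewrite splug_wplug in *. pose proof (closed_at_wplug _ _ _ H1) as H3.
    eapply closed_at_wplug_replace; eauto. simpl in *.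
    rewrite wdepth_splug_wctx in *. split; [|apply closed_at_lift]; auto.
  - split; auto. eapply closed_at_wplug_replace; eauto.
    replace (S k + wdepth W) with (k + S (wdepth W)) by lia. apply closed_at_lift; auto.
  - rewrite splug_wplug in *. rewrite lift0_rename in H1.
    apply (closed_at_rename_inv _ k) in H1; [| intros; lia].
    eapply closed_at_wplug_replace; eauto.
    rewrite wdepth_splug_wctx. apply closed_at_lift; auto.
Qed.

Lemma closed_at_steps t t' k : clos_refl_trans _ step_w t t' ->
  closed_at k t -> closed_at k t'.
Proof. induction 1; eauto using closed_at_step. Qed.

Lemma normal_answer_or_stuck n : normal step_w n ->
  answer n \/ exists W k, n = wplug W (Var (k + wdepth W)).
Proof.
  induction n as [n | b | n1 IH1 n2 IH2 | n1 IH1 n2 IH2]; intros Hn.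
  - right. exists WHole, n. simpl. f_equal; lia.
  - left. constructor.
  - assert (N1 : normal step_w n1) by (intros x Hx; apply (Hn (App x n2)); constructor; auto).
    assert (N2 : normal step_w n2) by (intros x Hx; apply (Hn (App n1 x)); apply w_appR; auto).
    destruct (IH1 N1) as [A1|[W [k ->]]].
    + destruct (IH2 N2) as [A2|[W [k ->]]].
      * exfalso. destruct (answer_splug _ A1) as [l [c [-> _]]].
        eapply Hn. apply w_root, root_m.
      * right. exists (WAppR n1 W), k. reflexivity.
    + right. exists (WAppL W n2), k. reflexivity.
  - assert (N1 : normal step_w n1) by (intros x Hx; apply (Hn (ES x n2)); apply w_esbody; auto).
    assert (N2 : normal step_w n2) by (intros x Hx; apply (Hn (ES n1 x)); apply w_esarg; auto).
    destruct (IH2 N2) as [A2|[W [k ->]]].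
    + destruct (IH1 N1) as [A1|[W [[|k] ->]]].
      * left. constructor; auto.
      * exfalso. eapply Hn. apply w_root, root_e.
      * right. exists (WESBody W n2), k. simpl. do 3 f_equal. lia.
    + right. exists (WESArg n1 W), k. reflexivity.
Qed.

Lemma eval_answer a s : answer a -> eval (subst s a) (subst s (aval a)).
Proof.
  intros A; revert s; induction A; intros s; simpl.
  - constructor.
  - econstructor; [apply IHA2|]. rewrite subst_up_scons, subst_subst_scons. auto.
Qed.

Theorem wn_w_iff_eval t : closed t ->
  weakly_normalizing step_w t <-> exists r, eval t r.
Proof.
  intros Hc. split.
  - intros [n [R Hn]].
    destruct (normal_answer_or_stuck n Hn) as [A|[W [k ->]]].
    + exists (aval n). apply (eval_steps_expand _ _ _ R).
      pose proof (eval_answer n Var A) as H. rewrite !subst_var in H. exact H.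
    + apply closed_at_steps with (k := 0), closed_at_wplug in R; auto.
      simpl in R. lia.
  - intros [r H]. eapply eval_wn; eauto.
Qed.

(** * Call-by-value *)

Lemma embed_llift t d c : embed (llift d c t) = lift d c (embed t).
Proof.
  revert c; induction t; intros; simpl; rewrite ?IHt, ?IHt1, ?IHt2; auto.
  destruct (n <? c); auto.
Qed.

Definition lsubst_env (k : nat) (v : lterm) : nat -> term := fun n =>
  if n =? k then lift k 0 (embed v) else if k <? n then Var (pred n) else Var n.

Lemma up_lsubst_env k v : up (lsubst_env k v) = lsubst_env (S k) v.
Proof.
  apply functional_extensionality; intros [|n]; [reflexivity|].
  unfold up, scons, lsubst_env. change (S n =? S k) with (n =? k).
  change (S k <? S n) with (k <? n).
  destruct (n =? k).
  - rewrite !lift0_rename, rename_rename. apply rename_ext. lia.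
  - destruct (k <? n) eqn:E; simpl; auto.
    apply Nat.ltb_lt in E. destruct n; [lia | reflexivity].
Qed.

Lemma embed_lsubst t k v : embed (lsubst k v t) = subst (lsubst_env k v) (embed t).
Proof.
  revert k; induction t; intros; simpl.
  - unfold lsubst_env. destruct (n =? k); [apply embed_llift|].
    destruct (k <? n); auto.
  - rewrite IHt, up_lsubst_env. auto.
  - rewrite IHt1, IHt2. auto.
Qed.

Lemma embed_lsubst0 t v :
  embed (lsubst 0 v t) = subst (scons (embed v) Var) (embed t).
Proof.
  rewrite embed_lsubst. f_equal. apply functional_extensionality; intros [|n];
    unfold lsubst_env; simpl; [|reflexivity].
  rewrite lift0_rename, rename_add0. reflexivity.
Qed.

Lemma lclosed_at_llift v k d c : lclosed_at k v -> lclosed_at (k + d) (llift d c v).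
Proof.
  revert k c; induction v; intros k c H; simpl in *.
  - destruct (n <? c); simpl; lia.
  - apply (IHv (S k)); auto.
  - destruct H; split; auto.
Qed.

Lemma lclosed_at_lsubst t j m v : lclosed_at (S m) t -> j <= m ->
  lclosed_at (m - j) v -> lclosed_at m (lsubst j v t).
Proof.
  revert j m; induction t; intros j m H Hj Hv; simpl in *.
  - destruct (n =? j) eqn:E.
    + apply Nat.eqb_eq in E; subst.
      pose proof (lclosed_at_llift v (m - j) j 0 Hv) as Hl.
      replace (m - j + j) with m in Hl by lia. exact Hl.
    + apply Nat.eqb_neq in E. destruct (j <? n) eqn:E2; simpl.
      * apply Nat.ltb_lt in E2. lia.
      * apply Nat.ltb_ge in E2. lia.
  - apply IHt; [exact H | lia | replace (S m - S j) with (m - j) by lia; exact Hv].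
  - destruct H; split; auto.
Qed.

Lemma lclosed_at_step t t' k : step_bv t t' -> lclosed_at k t -> lclosed_at k t'.
Proof.
  intros H; revert k; induction H; intros k Hc; simpl in *;
    destruct Hc as [H1 H2]; [|split; auto..].
  apply lclosed_at_lsubst; auto; [lia | rewrite Nat.sub_0_r; auto].
Qed.

Lemma lclosed_at_steps t t' k : clos_refl_trans _ step_bv t t' ->
  lclosed_at k t -> lclosed_at k t'.
Proof. induction 1; eauto using lclosed_at_step. Qed.

Lemma normal_lclosed_abs n : normal step_bv n -> lclosed n -> exists b, n = LLam b.
Proof.
  induction n as [n | b | n1 IH1 n2 IH2]; intros Hn Hc; simpl in *; unfold lclosed in *.
  - simpl in Hc. lia.
  - eauto.
  - destruct Hc as [H1 H2].
    destruct IH1 as [b1 ->]; auto.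
    { intros x Hx; apply (Hn (LApp x n2)); constructor; auto. }
    destruct IH2 as [b2 ->]; auto.
    { intros x Hx; apply (Hn (LApp (LLam b1) x)); apply bv_appR; auto. }
    exfalso. eapply Hn. apply bv_root.
Qed.

Lemma steps_bv_app t t' u u' : clos_refl_trans _ step_bv t t' ->
  clos_refl_trans _ step_bv u u' -> clos_refl_trans _ step_bv (LApp t u) (LApp t' u').
Proof.
  intros Ht Hu. apply rt_trans with (LApp t' u).
  - induction Ht; [apply rt_step; constructor | apply rt_refl | eapply rt_trans]; eauto.
  - induction Hu; [apply rt_step; apply bv_appR | apply rt_refl | eapply rt_trans]; eauto.
Qed.

Lemma eval_step_bv_expand t t' r : step_bv t t' -> eval (embed t') r -> eval (embed t) r.
Proof.
  intros H; revert r; induction H; intros r Hr; simpl in *.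
  - rewrite embed_lsubst0 in Hr. econstructor; [constructor | constructor | exact Hr].
  - inversion Hr; subst. econstructor; eauto.
  - inversion Hr; subst. econstructor; eauto.
Qed.

Lemma eval_steps_bv_expand t t' r : clos_refl_trans _ step_bv t t' ->
  eval (embed t') r -> eval (embed t) r.
Proof. intros H; revert r; induction H; eauto using eval_step_bv_expand. Qed.

Lemma eval_embed_steps_bv s r : eval s r -> forall t, embed t = s ->
  exists t', clos_refl_trans _ step_bv t t' /\ embed t' = r.
Proof.
  induction 1 as [b | a b a' v r Ha IHa Hb IHb _ IHr | ]; intros t Ht.
  - exists t. split; [apply rt_refl | auto].
  - destruct t as [| |t1 t2]; simpl in Ht; try discriminate. injection Ht as <- <-.
    destruct (IHa t1 eq_refl) as [[| c |] [R1 E1]]; try discriminate.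
    injection E1 as <-.
    destruct (eval_abs _ _ Hb) as [bv ->].
    destruct (IHb t2 eq_refl) as [[| d |] [R2 E2]]; try discriminate.
    injection E2 as <-.
    destruct (IHr (lsubst 0 (LLam d) c)) as [t3 [R3 E3]].
    { rewrite embed_lsubst0. reflexivity. }
    exists t3. split; auto.
    eapply rt_trans; [apply steps_bv_app; eauto|].
    eapply rt_trans; [apply rt_step, bv_root | auto].
  - destruct t; discriminate.
Qed.

Theorem wn_bv_iff_eval t : lclosed t ->
  weakly_normalizing step_bv t <-> exists r, eval (embed t) r.
Proof.
  intros Hc. split.
  - intros [n [R Hn]].
    destruct (normal_lclosed_abs n Hn) as [b ->]; [eapply lclosed_at_steps; eauto|].
    exists (Lam (embed b)). eapply eval_steps_bv_expand; eauto. constructor.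
  - intros [r H]. destruct (eval_embed_steps_bv _ _ H t eq_refl) as [t' [R E]].
    exists t'. split; auto. destruct (eval_abs _ _ H) as [b ->].
    destruct t'; try discriminate. intros x Hx. inversion Hx.
Qed.

(** * Unfolding explicit substitutions *)

Fixpoint unfold (t : term) : lterm :=
  match t with
  | Var n => LVar n
  | Lam b => LLam (unfold b)
  | App a b => LApp (unfold a) (unfold b)
  | ES a b => LApp (LLam (unfold a)) (unfold b)
  end.

Lemma unfold_embed t : unfold (embed t) = t.
Proof. induction t; simpl; congruence. Qed.

Lemma embed_unfold_rename t xi :
  embed (unfold (rename xi t)) = rename xi (embed (unfold t)).
Proof. revert xi; induction t; intros; simpl; rewrite ?IHt, ?IHt1, ?IHt2; auto. Qed.

Lemma embed_unfold_subst t s :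
  embed (unfold (subst s t)) = subst (fun n => embed (unfold (s n))) (embed (unfold t)).
Proof.
  assert (Hup : forall s, (fun n => embed (unfold (up s n))) =
                          up (fun n => embed (unfold (s n)))).
  { intros s'. apply functional_extensionality; intros [|n]; [reflexivity|].
    apply embed_unfold_rename. }
  revert s; induction t; intros; simpl; rewrite ?IHt, ?IHt1, ?IHt2, ?Hup; auto.
Qed.

Lemma embed_unfold_subst_scons t v :
  embed (unfold (subst (scons v Var) t)) =
  subst (scons (embed (unfold v)) Var) (embed (unfold t)).
Proof.
  rewrite embed_unfold_subst. f_equal.
  apply functional_extensionality; intros [|n]; reflexivity.
Qed.

Lemma eval_unfold s r : eval s r -> eval (embed (unfold s)) (embed (unfold r)).
Proof.
  induction 1; simpl in *; rewrite ?embed_unfold_subst_scons in *.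
  - constructor.
  - econstructor; eauto.
  - econstructor; [constructor | eauto | eauto].
Qed.

Lemma eval_unfold_inv s' r' : eval s' r' -> forall s, embed (unfold s) = s' ->
  exists r, eval s r /\ embed (unfold r) = r'.
Proof.
  induction 1 as [b | a b a' v r Ha IHa _ IHb _ IHr | a b v r _ IHb _ IHr];
    intros s Hs.
  - destruct s; simpl in Hs; try discriminate. injection Hs as <-.
    exists (Lam s). split; [constructor | auto].
  - destruct s as [| |s1 s2|s1 s2]; simpl in Hs; try discriminate;
      injection Hs as <- <-.
    + destruct (IHa s1 eq_refl) as [r1 [R1 E1]].
      destruct (eval_abs _ _ R1) as [c ->]. simpl in E1. injection E1 as <-.
      destruct (IHb s2 eq_refl) as [r2 [R2 <-]].
      destruct (IHr (subst (scons r2 Var) c)) as [r3 [R3 E3]];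
        [apply embed_unfold_subst_scons|].
      exists r3. split; [econstructor; eauto | auto].
    + inversion Ha; subst.
      destruct (IHb s2 eq_refl) as [r2 [R2 <-]].
      destruct (IHr (subst (scons r2 Var) s1)) as [r3 [R3 E3]];
        [apply embed_unfold_subst_scons|].
      exists r3. split; [econstructor; eauto | auto].
  - destruct s; discriminate.
Qed.

Lemma closed_at_unfold t k : closed_at k t -> lclosed_at k (unfold t).
Proof. revert k; induction t; intros k H; simpl in *; intuition. Qed.

Lemma lclosed_at_embed t k : lclosed_at k t -> closed_at k (embed t).
Proof. revert k; induction t; intros k H; simpl in *; intuition. Qed.

Lemma wn_bv_iff_wn_w_embed t : lclosed t ->
  weakly_normalizing step_bv t <-> weakly_normalizing step_w (embed t).
Proof.
  intros Hc. rewrite wn_bv_iff_eval, wn_w_iff_eval; [tauto | |auto].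
  apply lclosed_at_embed, Hc.
Qed.

Lemma wn_w_iff_wn_bv_unfold t : closed t ->
  weakly_normalizing step_w t <-> weakly_normalizing step_bv (unfold t).
Proof.
  intros Hc. rewrite wn_w_iff_eval, wn_bv_iff_eval; [|apply closed_at_unfold, Hc|auto].
  split.
  - intros [r H]. exists (embed (unfold r)). apply eval_unfold, H.
  - intros [r' H]. destruct (eval_unfold_inv _ _ H t eq_refl) as [r [Hr _]]. eauto.
Qed.

Fixpoint embed_ctx (C : lctx) : sctx :=
  match C with
  | LHole => CHole
  | LCLam C' => CLam (embed_ctx C')
  | LCAppL C' u => CAppL (embed_ctx C') (embed u)
  | LCAppR u C' => CAppR (embed u) (embed_ctx C')
  end.

Lemma cplug_embed_ctx C t : cplug (embed_ctx C) (embed t) = embed (lplug C t).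
Proof. induction C; simpl; congruence. Qed.

Fixpoint unfold_ctx (C : sctx) : lctx :=
  match C with
  | CHole => LHole
  | CLam C' => LCLam (unfold_ctx C')
  | CAppL C' u => LCAppL (unfold_ctx C') (unfold u)
  | CAppR u C' => LCAppR (unfold u) (unfold_ctx C')
  | CESBody C' u => LCAppL (LCLam (unfold_ctx C')) (unfold u)
  | CESArg u C' => LCAppR (LLam (unfold u)) (unfold_ctx C')
  end.

Lemma unfold_cplug C t : unfold (cplug C t) = lplug (unfold_ctx C) (unfold t).
Proof. induction C; simpl; congruence. Qed.

Lemma lclosed_unfold_ctx C t : closed (cplug C (embed t)) ->
  lclosed (lplug (unfold_ctx C) t).
Proof.
  intros H. rewrite <- (unfold_embed t), <- unfold_cplug. apply closed_at_unfold, H.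
Qed.

Theorem theorem7p6 : forall t u : lterm,
  ctx_equiv_S (embed t) (embed u) <-> ctx_equiv_V t u.
Proof.
  intros t u. split.
  - intros Heq C Ht Hu.
    rewrite (wn_bv_iff_wn_w_embed _ Ht), (wn_bv_iff_wn_w_embed _ Hu),
      <- !cplug_embed_ctx.
    apply Heq; rewrite cplug_embed_ctx; apply lclosed_at_embed; auto.
  - intros Heq C Ht Hu.
    rewrite (wn_w_iff_wn_bv_unfold _ Ht), (wn_w_iff_wn_bv_unfold _ Hu),
      !unfold_cplug, !unfold_embed.
    apply Heq; apply lclosed_unfold_ctx; auto.
Qed.
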